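(* Let $n\ge 1$ and $l$ be integers, and fix a linear ordering of $\{E,D,N\}$. Let $BDel(n,n,l)$ be the set of paths in $Del(n,n,l)$ that go strictly above the line $y=x$ at some point. Then $$\sum_{W\in BDel(n,n,l)} q^{\mathrm{maj}(W)} = q\sum_{W\in Del(n+1,n-1,l)} q^{\mathrm{maj}(W)}\quad\text{if } E<N,$$ and $$\sum_{W\in BDel(n,n,l)} q^{\mathrm{maj}(W)} = \sum_{W\in Del(n+1,n-1,l)} q^{\mathrm{maj}(W)}\quad\text{if } E>N.$$ Equivalently, there is a bijection $\varphi:BDel(n,n,l)\to Del(n+1,n-1,l)$ with $\mathrm{maj}(W)=\mathrm{maj}(\varphi(W))+1$ for all $W$ if $E<N$, and $\mathrm{maj}(W)=\mathrm{maj}(\varphi(W))$ for all $W$ if $E>N$.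
   Context: A Delannoy path from $(0,0)$ to $(m,n)$ is a lattice path using only the steps $E=(1,0)$, $D=(1,1)$, $N=(0,1)$; a path with $l$ steps is identified with the word $W=w_1w_2\cdots w_l$ over the alphabet $\{E,D,N\}$. $Del(m,n,l)$ denotes the set of Delannoy paths from $(0,0)$ to $(m,n)$ with exactly $l$ steps. Given a linear ordering of $\{E,D,N\}$, an index $i$ with $1\le i\le l-1$ is a descent of $W$ if $w_i>w_{i+1}$, and $\mathrm{maj}(W)=\sum_{i \text{ descent}} i$. *)

From HB Require Import structures.
From mathcomp Require Import all_boot all_order all_algebra.
Set Implicit Arguments. Unset Strict Implicit. Unset Printing Implicit Defensive.
Import GRing.Theory.

(* Steps of a Delannoy path: E = (1,0), D = (1,1), N = (0,1). *)
Inductive step := E | D | N.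

Definition step_to (s : step) : 'I_3 :=
  match s with E => inord 0 | D => inord 1 | N => inord 2 end.
Definition step_of (i : 'I_3) : step :=
  match val i with 0 => E | 1 => D | _ => N end.
Lemma step_toK : cancel step_to step_of.
Proof. by case; rewrite /step_to /step_of /= inordK. Qed.
HB.instance Definition _ := Finite.copy step (can_type step_toK).

(* A path with l steps is a word (l-tuple) over {E,D,N}. *)
Definition xcoord (w : seq step) : nat := count (fun s => s != N) w.
Definition ycoord (w : seq step) : nat := count (fun s => s != E) w.

Definition Del (m n l : nat) : {set l.-tuple step} :=
  [set W : l.-tuple step | (xcoord W == m) && (ycoord W == n)].

Definition goes_above (w : seq step) : bool :=
  [exists i : 'I_(size w).+1, xcoord (take i w) < ycoord (take i w)].

Definition BDel (n l : nat) : {set l.-tuple step} :=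
  [set W in Del n n l | goes_above W].

(* A linear ordering of {E,D,N} is given by an injective rank function rk:
   a < b iff rk a < rk b.  maj(W) = sum of the (1-based) descent positions. *)
Definition maj (rk : step -> nat) (w : seq step) : nat :=
  \sum_(i < (size w).-1 | rk (nth E w i) > rk (nth E w i.+1)) i.+1.

(* Both sides are maj-generating functions of words with a prescribed letter
   content.  Write G(k,c) (resp. B(k,c)) for the generating function of the
   words (resp. the words going strictly above y = x) with k(s) letters s and
   last letter c.  Removing the last letter gives a linear recursion for G,
   and the same recursion for B as long as #N <= #E (the endpoint is then not
   above the diagonal).  The recursion yields MacMahon's closed form
     G(k,c) [k E]_q! [k D]_q! [k N]_q! = q^(#letters > c) [k c]_q [L-1]_q!
   (L the length), whence, when #E = #N, G(k,E) = q^[E<N] G(sh k,E), where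
   sh k trades one N for one E.  An induction on the length then shows
   B(k,c) = q^[E<N] G(sh k,c) whenever 0 < #N <= #E: at each step either the
   recursion transfers the identity, or (balanced case) all shorter words go
   above the diagonal, or both sides vanish.  The content (l-n, 2n-l, l-n)
   describes Del(n,n,l) and its shift describes Del(n+1,n-1,l); summing over
   the last letter yields the theorem. *)

From mathcomp Require Import all_boot all_order all_algebra ring zify.
Import GRing.Theory Num.Theory.
Local Open Scope ring_scope.

Lemma eq_ED : (E == D) = false. Proof. by apply/eqP. Qed.
Lemma eq_EN : (E == N) = false. Proof. by apply/eqP. Qed.
Lemma eq_DE : (D == E) = false. Proof. by apply/eqP. Qed.
Lemma eq_DN : (D == N) = false. Proof. by apply/eqP. Qed.
Lemma eq_NE : (N == E) = false. Proof. by apply/eqP. Qed.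
Lemma eq_ND : (N == D) = false. Proof. by apply/eqP. Qed.
Definition stepE := (eqxx, eq_ED, eq_EN, eq_DE, eq_DN, eq_NE, eq_ND).

Lemma xcoordE w : xcoord w = (count_mem E w + count_mem D w)%N.
Proof. by elim: w => //= s w ->; case: s; rewrite /= ?stepE /=; lia. Qed.

Lemma ycoordE w : ycoord w = (count_mem N w + count_mem D w)%N.
Proof. by elim: w => //= s w ->; case: s; rewrite /= ?stepE /=; lia. Qed.

Lemma size_countE w :
  size w = (count_mem E w + count_mem D w + count_mem N w)%N.
Proof. by elim: w => //= s w ->; case: s; rewrite /= ?stepE /=; lia. Qed.

(* The words of length n, listed by appending a last letter; sums over
   n.-tuples are sums over this list, which supports induction on n. *)
Definition steps : seq step := [:: E; D; N].

Fixpoint words n : seq (seq step) :=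
  if n is n'.+1 then [seq rcons w c | w <- words n', c <- steps] else [:: [::]].

Lemma mem_words n w : (w \in words n) = (size w == n).
Proof.
elim: n w => [|n IH] w; first by rewrite inE; case: w.
apply/allpairsP/idP => [[[w' c] [+ _ ->]]|].
  by rewrite size_rcons eqSS -IH.
case/lastP: w => [//|w c]; rewrite size_rcons eqSS -IH => w_n.
by exists (w, c); split => //; case: c; rewrite !inE ?stepE ?orbT.
Qed.

Lemma uniq_words n : uniq (words n).
Proof.
elim: n => // n IH; apply: allpairs_uniq => //; first by rewrite /= !inE !stepE.
by move=> [a b] [c d] _ _ /= /rcons_inj [-> ->].
Qed.

Lemma sum_words_rcons (F : seq step -> {poly int}) n (P : pred (seq step)) :
  \sum_(w <- words n.+1 | P w) F w =
  \sum_(w <- words n) \sum_(c <- steps | P (rcons w c)) F (rcons w c).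
Proof.
rewrite big_mkcond big_allpairs_dep; apply: eq_bigr => w _.
by rewrite [RHS]big_mkcond.
Qed.

Lemma sum_tuples_words l (P : pred (seq step)) (F : seq step -> {poly int}) :
  \sum_(W : l.-tuple step | P W) F W = \sum_(w <- words l | P w) F w.
Proof.
rewrite -[LHS](big_map val P F); apply: perm_big; apply: uniq_perm.
- by rewrite map_inj_uniq ?index_enum_uniq //; exact: val_inj.
- exact: uniq_words.
move=> w; rewrite mem_words; apply/mapP/idP => [[W _ ->]|w_l].
  by rewrite size_tuple.
by exists (Tuple w_l) => //; rewrite mem_index_enum.
Qed.

Lemma sum_split_last (s : seq (seq step)) (Q : pred (seq step))
    (G : seq step -> {poly int}) :
  \sum_(w <- s | Q w) G w =
  \sum_(c <- steps) \sum_(w <- s | Q w && (last E w == c)) G w.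
Proof.
under [RHS]eq_bigr => c _ do rewrite big_mkcondr.
rewrite exchange_big /=; apply: eq_bigr => w _.
by rewrite !big_cons big_nil; case: (last E w); rewrite !stepE ?addr0 ?add0r.
Qed.

Lemma maj_rcons rk w c : maj rk (rcons w c) =
  (maj rk w + (if rk c < rk (last E w) then size w else 0))%N.
Proof.
rewrite /maj size_rcons /=.
case: w => [|a w]; first by rewrite !big_ord0; case: ifP.
rewrite [size _]/= big_mkcond big_ord_recr /= [X in (_ = X + _)%N]big_mkcond.
have nth_aw i : (i <= size w)%N ->
    nth E (a :: rcons w c) i = nth E (a :: w) i.
  by move=> i_w; rewrite -rcons_cons nth_rcons /= ltnS i_w.
congr (_ + _)%N.
  by apply: eq_bigr => i _; rewrite !nth_rcons ltn_ord !nth_aw // ltnW.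
rewrite nth_rcons ltnn eqxx nth_aw //.
by have -> : nth E (a :: w) (size w) = last a w by rewrite nth_last.
Qed.

Definition content_is (k : step -> nat) (w : seq step) : bool :=
  [&& count_mem E w == k E, count_mem D w == k D & count_mem N w == k N].

Definition dec (k : step -> nat) (c : step) : step -> nat :=
  fun s => if s == c then (k s).-1 else k s.

Definition total (k : step -> nat) : nat := (k E + k D + k N)%N.

Lemma content_rcons k w c :
  content_is k (rcons w c) = (0 < k c)%N && content_is (dec k c) w.
Proof.
rewrite /content_is /dec -cats1 !count_cat /=.
case: c; rewrite !stepE /= !addn0.
- by case: (k E) => [|m]; rewrite addn1 ?eqSS //= andbF.
- by case: (k D) => [|m]; rewrite addn1 ?eqSS //= andbF.
- by case: (k N) => [|m]; rewrite addn1 ?eqSS //= !andbF.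
Qed.

Lemma total_dec k c : (0 < k c)%N -> total (dec k c) = (total k).-1.
Proof. by case: c; rewrite /total /dec !stepE; lia. Qed.

Definition gen_with (rk : step -> nat) n k c (P : pred (seq step)) :
    {poly int} :=
  \sum_(w <- words n | [&& content_is k w, last E w == c & P w]) 'X^(maj rk w).

Lemma gen_with_ext rk n k1 k2 c P :
  k1 =1 k2 -> gen_with rk n k1 c P = gen_with rk n k2 c P.
Proof. by move=> k12; apply: eq_bigl => w; rewrite /content_is !k12. Qed.

(* Last-letter recursion: w c' c has a new descent, at position n, iff
   c < c'.  Valid for properties P that appending a letter does not change
   among words of content k. *)
Lemma gen_with_rec rk n k c P :
  (forall w c', content_is k (rcons w c') -> P (rcons w c') = P w) ->
  gen_with rk n.+1 k c P =
  if (0 < k c)%N then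
    \sum_(c' <- steps) (if (rk c < rk c')%N then 'X^n else 1) *
                       gen_with rk n (dec k c) c' P
  else 0.
Proof.
move=> P_rcons; rewrite /gen_with sum_words_rcons.
have appended w : w \in words n ->
  \sum_(c0 <- steps | [&& content_is k (rcons w c0), last E (rcons w c0) == c
                        & P (rcons w c0)]) 'X^(maj rk (rcons w c0)) =
  (if [&& (0 < k c)%N, content_is (dec k c) w & P w] then
    'X^(maj rk w) * (if (rk c < rk (last E w))%N then 'X^n else 1)
   else 0) :> {poly int}.
  rewrite mem_words => /eqP w_n.
  have cond : [&& content_is k (rcons w c), true & P (rcons w c)] =
              [&& (0 < k c)%N, content_is (dec k c) w & P w].
    rewrite [RHS]andbA -content_rcons /=.
    by case k_wc: (content_is k (rcons w c)); rewrite ?(P_rcons _ _ k_wc).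
  have maj_wc : 'X^(maj rk (rcons w c)) =
      'X^(maj rk w) * (if (rk c < rk (last E w))%N then 'X^n else 1)
      :> {poly int}.
    by rewrite maj_rcons exprD w_n; case: ifP; rewrite ?expr0.
  rewrite !big_cons big_nil !last_rcons.
  by case: c cond maj_wc; rewrite !stepE /= ?andbF ?addr0 ?add0r => -> ->.
rewrite big_seq (eq_bigr _ appended) -big_seq.
case: (ltnP 0 (k c)) => k_c; last by rewrite big1 // => w _; rewrite ltnNge k_c.
rewrite -big_mkcond /= sum_split_last.
apply: eq_bigr => c' _; rewrite mulr_sumr big_seq_cond [RHS]big_seq_cond.
apply: eq_big => [w|w /and3P [_ _ /eqP ->]]; last by rewrite mulrC.
by case: (w \in words n); case: (content_is _ w); case: (P w);
  case: (last E w == c').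
Qed.

Definition gen (rk : step -> nat) (n : nat) (k : step -> nat) (c : step) :
    {poly int} :=
  gen_with rk n k c predT.

Lemma gen_rec rk n k c : gen rk n.+1 k c =
  if (0 < k c)%N then
    \sum_(c' <- steps) (if (rk c < rk c')%N then 'X^n else 1) *
                       gen rk n (dec k c) c'
  else 0.
Proof. exact: gen_with_rec. Qed.

(* Base case: the empty word, whose default last letter is E. *)
Lemma gen0 rk k c :
  gen rk 0 k c = if content_is k [::] && (E == c) then 1 else 0.
Proof.
rewrite /gen /gen_with /= big_cons big_nil andbT.
by case: ifP; rewrite ?addr0 // /maj big_ord0 expr0.
Qed.

Fixpoint qint n : {poly int} := if n is m.+1 then 1 + 'X * qint m else 0.
Fixpoint qfact n : {poly int} := if n is m.+1 then qfact m * qint m.+1 else 1.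

Definition qprod (k : step -> nat) : {poly int} :=
  qfact (k E) * qfact (k D) * qfact (k N).

Definition nb_greater (rk : step -> nat) (k : step -> nat) (c : step) : nat :=
  ((if rk c < rk E then k E else 0) + (if rk c < rk D then k D else 0)
   + (if rk c < rk N then k N else 0))%N.

Lemma qintE n : qint n * (1 - 'X) = 1 - 'X^n.
Proof.
elim: n => [|n IH] /=; first by rewrite mul0r expr0 subrr.
by rewrite mulrDl -mulrA IH exprS; ring.
Qed.

Lemma one_subX_neq0 : (1 - 'X : {poly int}) != 0.
Proof.
apply/eqP => /(congr1 (horner^~ 0)) /eqP.
by rewrite !hornerE /= oner_eq0.
Qed.

(* q-integers and q-factorials specialise to integers and factorials at q=1,
   hence do not vanish. *)
Lemma qint_at1 n : (qint n).[1] = n%:R.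
Proof. by elim: n => [|n IH] /=; rewrite ?horner0 // !hornerE IH mulrS. Qed.

Lemma qfact_at1 n : (qfact n).[1] = (n`!)%:R.
Proof.
elim: n => [|n IH]; first by rewrite /= hornerE.
have -> : qfact n.+1 = qfact n * qint n.+1 by [].
by rewrite hornerM IH qint_at1 factS natrM mulrC.
Qed.

Lemma neq0_at1 (p : {poly int}) : p.[1] != 0 -> p != 0.
Proof. by apply: contraNneq => ->; rewrite horner0. Qed.

Lemma qint_neq0 n : (0 < n)%N -> qint n != 0.
Proof. by move=> n_gt0; apply: neq0_at1; rewrite qint_at1 pnatr_eq0 -lt0n. Qed.

Lemma qprod_neq0 k : qprod k != 0.
Proof.
have qfact_neq0 n : qfact n != 0.
  by apply: neq0_at1; rewrite qfact_at1 pnatr_eq0 -lt0n fact_gt0.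
by rewrite /qprod !mulf_neq0.
Qed.

Lemma qprod_dec k c : (0 < k c)%N -> qprod k = qprod (dec k c) * qint (k c).
Proof.
rewrite /qprod /dec; case: c; rewrite !stepE.
- by case: (k E) => // m _ /=; ring.
- by case: (k D) => // m _ /=; ring.
- by case: (k N) => // m _ /=; ring.
Qed.

Lemma nb_greater_dec rk k c : nb_greater rk (dec k c) c = nb_greater rk k c.
Proof. by rewrite /nb_greater /dec; case: c; rewrite !stepE ltnn. Qed.

(* The q-identity behind the closed form: distributing [L]_q over the
   possible next-to-last letters, ordered by the linear order rk. *)
Lemma qint_split rk (rk_inj : injective rk) k c :
  \sum_(c' <- steps) (if (rk c < rk c')%N then 'X^(total k) else 1) *
     ('X^(nb_greater rk k c') * qint (k c')) =
  'X^(nb_greater rk k c) * qint (total k).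
Proof.
apply: (mulIf one_subX_neq0).
rewrite !big_cons big_nil addr0 !mulrDl -!mulrA !qintE /nb_greater /total.
have [ED|ED|ED] := ltngtP (rk E) (rk D); last by move/rk_inj: ED.
all: have [DN|DN|DN] := ltngtP (rk D) (rk N); last by move/rk_inj: DN.
all: have [EN|EN|EN] := ltngtP (rk E) (rk N); last by move/rk_inj: EN.
all: try (exfalso; lia).
all: case: c; rewrite ?ltnn ?ED ?DN ?EN ?(leq_gtF (ltnW ED))
  ?(leq_gtF (ltnW DN)) ?(leq_gtF (ltnW EN)) /=.
all: by rewrite ?addn0 ?add0n ?expr0 !exprD; ring.
Qed.

Lemma gen_closed_form rk (rk_inj : injective rk) n k c :
  total k = n.+1 ->
  gen rk n.+1 k c * qprod k = 'X^(nb_greater rk k c) * qint (k c) * qfact n.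
Proof.
elim: n k c => [|n IH] k c k_n; rewrite gen_rec.
  case: (posnP (k c)) => k_c; first by rewrite k_c mul0r /= mulr0 mul0r.
  rewrite !big_cons big_nil !gen0 /content_is /dec /qprod /nb_greater.
  move: k_c k_n; rewrite /total; case: c => k_c k_n.
  - have [-> -> ->] : [/\ k E = 1, k D = 0 & k N = 0]%N by split; lia.
    by rewrite !stepE /= ltnn !if_same; ring.
  - have [-> -> ->] : [/\ k E = 0, k D = 1 & k N = 0]%N by split; lia.
    by rewrite !stepE /= ltnn !if_same; ring.
  - have [-> -> ->] : [/\ k E = 0, k D = 0 & k N = 1]%N by split; lia.
    by rewrite !stepE /= ltnn !if_same; ring.
case: (posnP (k c)) => k_c; first by rewrite k_c mul0r /= mulr0 mul0r.
have dec_n : total (dec k c) = n.+1 by rewrite total_dec // k_n.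
rewrite (qprod_dec _ _ k_c) mulr_suml.
transitivity ((\sum_(c' <- steps) (if (rk c < rk c')%N then 'X^(n.+1) else 1) *
      ('X^(nb_greater rk (dec k c) c') * qint (dec k c c')))
    * qfact n * qint (k c)).
  rewrite !mulr_suml; apply: eq_bigr => c' _.
  have regroup (a b x y : {poly int}) : (a * b) * (x * y) = a * (b * x) * y.
    by ring.
  by rewrite regroup IH // !mulrA.
rewrite -dec_n qint_split // nb_greater_dec dec_n /=; ring.
Qed.

Definition sh (k : step -> nat) : step -> nat :=
  fun s => if s == E then (k E).+1 else if s == N then (k N).-1 else k s.

Lemma dec_sh k c : (0 < k c)%N -> dec (sh k) c =1 sh (dec k c).
Proof.
by move=> k_c s; rewrite /sh /dec; case: c k_c; case: s; rewrite !stepE //=; lia.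
Qed.

(* Balanced contents: if #E = #N > 0, the closed form shows that trading an
   N for an E multiplies G(k,E) by q^[E<N]. *)
Lemma gen_shift_balanced rk (rk_inj : injective rk) n k :
  total k = n.+1 -> k E = k N -> (0 < k N)%N ->
  gen rk n.+1 k E = 'X^(rk E < rk N)%N * gen rk n.+1 (sh k) E.
Proof.
move=> k_n EN N_gt0.
have sh_n : total (sh k) = n.+1 by move: k_n; rewrite /total /sh !stepE; lia.
have qprod_sh : qprod (sh k) * qint (k N) = qprod k * qint (k N).+1.
  by rewrite /qprod /sh !stepE /= EN; case: (k N) N_gt0 => // m _ /=; ring.
have greater_sh :
    nb_greater rk k E = (nb_greater rk (sh k) E + (rk E < rk N))%N.
  rewrite /nb_greater /sh !stepE ltnn /=.
  by case: (rk E < rk N)%N; case: (rk E < rk D)%N => /=; lia.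
have closed_k := gen_closed_form rk rk_inj n k E k_n.
have closed_sh := gen_closed_form rk rk_inj n (sh k) E sh_n.
apply: (mulIf (mulf_neq0 (qprod_neq0 k) (qint_neq0 _ (ltn0Sn (k N))))).
rewrite -[in RHS]qprod_sh.
have -> : gen rk n.+1 k E * (qprod k * qint (k N).+1) =
          (gen rk n.+1 k E * qprod k) * qint (k N).+1 by ring.
have -> : 'X^(rk E < rk N)%N * gen rk n.+1 (sh k) E
            * (qprod (sh k) * qint (k N))
        = 'X^(rk E < rk N)%N * (gen rk n.+1 (sh k) E * qprod (sh k))
            * qint (k N).
  by ring.
by rewrite closed_k closed_sh greater_sh /sh !stepE EN exprD; ring.
Qed.

Lemma goes_aboveE w : goes_above w =
  has (fun i => xcoord (take i w) < ycoord (take i w))%N (iota 0 (size w).+1).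
Proof.
apply/existsP/hasP => [[i above_i]|[i + above_i]].
  by exists (val i) => //; rewrite mem_iota add0n ltn_ord.
by rewrite mem_iota add0n => i_w; exists (Ordinal i_w).
Qed.

Lemma goes_above_rcons w c : goes_above (rcons w c) =
  goes_above w || (xcoord (rcons w c) < ycoord (rcons w c))%N.
Proof.
rewrite !goes_aboveE size_rcons -[(size w).+2]addn1 iotaD add0n has_cat.
rewrite (_ : iota (size w).+1 1 = [:: (size w).+1]) // has_seq1.
rewrite (take_oversize (n := (size w).+1)) ?size_rcons //; congr (_ || _).
apply: eq_in_has => i; rewrite mem_iota add0n ltnS => /andP [_ i_w].
rewrite -cats1 take_cat; case: ifP => // /negbT; rewrite -leqNgt => w_i.
have -> : i = size w by apply/eqP; rewrite eqn_leq i_w w_i.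
by rewrite subnn take0 cats0 take_size.
Qed.

Lemma goes_above_count_N w : goes_above w -> (0 < count_mem N w)%N.
Proof.
rewrite goes_aboveE lt0n => /hasP [i _]; apply: contraTneq => no_N.
have : count_mem N (take i w) = 0%N.
  have := count_cat (pred1 N) (take i w) (drop i w).
  by rewrite cat_take_drop; lia.
by rewrite xcoordE ycoordE => ->; lia.
Qed.

Definition gen_above (rk : step -> nat) (n : nat) (k : step -> nat)
    (c : step) : {poly int} :=
  gen_with rk n k c goes_above.

(* If #N <= #E the endpoint lies weakly below the diagonal, so B obeys the
   same recursion as G. *)
Lemma gen_above_rec rk n k c : (k N <= k E)%N -> gen_above rk n.+1 k c =
  if (0 < k c)%N then
    \sum_(c' <- steps) (if (rk c < rk c')%N then 'X^n else 1) *
                       gen_above rk n (dec k c) c'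
  else 0.
Proof.
move=> NE; apply: gen_with_rec => w c' /and3P [/eqP wE /eqP wD /eqP wN].
rewrite goes_above_rcons xcoordE ycoordE wE wD wN ltn_add2r.
by rewrite ltnNge NE orbF.
Qed.

Lemma gen_above_noN rk n k c : k N = 0%N -> gen_above rk n k c = 0.
Proof.
move=> no_N; apply: big1 => w /and3P [/and3P [_ _ /eqP wN] _].
by move/goes_above_count_N; rewrite wN no_N.
Qed.

(* If #E < #N every word ends, hence goes, above the diagonal. *)
Lemma gen_above_all rk n k c :
  (k E < k N)%N -> gen_above rk n k c = gen rk n k c.
Proof.
move=> EN; apply: eq_bigl => w /=.
case k_w: (content_is k w) => //=.
suff -> : goes_above w by [].
move: k_w => /and3P [/eqP wE /eqP wD /eqP wN]; rewrite goes_aboveE.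
apply/hasP; exists (size w); first by rewrite mem_iota add0n ltnSn.
by rewrite take_size xcoordE ycoordE wE wD wN ltn_add2r.
Qed.

Lemma gen_above_shift rk (rk_inj : injective rk) n k c :
  total k = n -> (k N <= k E)%N -> (0 < k N)%N ->
  gen_above rk n k c = 'X^(rk E < rk N)%N * gen rk n (sh k) c.
Proof.
elim: n k c => [|n IH] k c k_n NE N_gt0.
  by move: k_n; rewrite /total; lia.
(* Whenever removing c keeps 0 < #N <= #E, the recursions match termwise. *)
have transfer : (0 < k c)%N = (0 < sh k c)%N ->
    ((0 < k c)%N -> (dec k c N <= dec k c E)%N && (0 < dec k c N)%N) ->
    gen_above rk n.+1 k c = 'X^(rk E < rk N)%N * gen rk n.+1 (sh k) c.
  move=> pos_sh dec_ok; rewrite gen_above_rec // gen_rec -pos_sh.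
  case: ifP => k_c; last by rewrite mulr0.
  rewrite mulr_sumr; apply: eq_bigr => c' _.
  have /andP [NE' N_gt0'] := dec_ok k_c.
  rewrite IH ?total_dec ?k_n // mulrCA; congr (_ * (_ * _)).
  by apply: gen_with_ext => s; rewrite dec_sh.
case: c transfer => transfer.
- have [NE_lt|EN_lt|balanced] := ltngtP (k N) (k E).
  + by apply: transfer; rewrite /sh /dec !stepE; lia.
  + by move: NE; rewrite leqNgt EN_lt.
  (* balanced: every shorter word ends above the diagonal *)
  rewrite -gen_shift_balanced // gen_above_rec // gen_rec.
  case: ifP => // _; apply: eq_bigr => c' _; rewrite gen_above_all //.
  by rewrite /dec !stepE; lia.
- by apply: transfer; rewrite /sh /dec !stepE /=; lia.
- have [N1|N1|N1] := ltngtP (k N) 1; first by lia.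
  + by apply: transfer; rewrite /sh /dec !stepE; lia.
  (* a single N, used last: neither side has any word *)
  rewrite gen_above_rec // gen_rec /sh !stepE N1 /=.
  rewrite mulr0 big1 // => c' _.
  by rewrite gen_above_noN ?mulr0 // /dec !stepE N1.
Qed.

Definition del_content (m n l : nat) : step -> nat :=
  fun s => if s == E then (l - n)%N else if s == D then (m + n - l)%N
           else (l - m)%N.

Lemma Del_content m n l w : size w = l ->
  (m <= l)%N -> (n <= l)%N -> (l <= m + n)%N ->
  (xcoord w == m) && (ycoord w == n) = content_is (del_content m n l) w.
Proof.
rewrite /content_is /del_content !stepE xcoordE ycoordE size_countE => w_l *.
by apply/andP/and3P => [[/eqP ? /eqP ?]|[/eqP ? /eqP ? /eqP ?]];
  split; apply/eqP; lia.
Qed.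

Lemma sh_del_content n l : (0 < n)%N -> (n <= l)%N ->
  sh (del_content n n l) =1 del_content n.+1 n.-1 l.
Proof. by move=> *; case; rewrite /sh /del_content !stepE; lia. Qed.

Lemma sum_gen_with rk l k P :
  \sum_(c <- steps) gen_with rk l k c P =
  \sum_(w <- words l | content_is k w && P w) 'X^(maj rk w).
Proof.
rewrite [RHS]sum_split_last; apply: eq_bigr => c _; apply: eq_bigl => w.
by rewrite -andbA [P w && _]andbC.
Qed.

Lemma eq_sum_words l (P Q : pred (seq step)) (F : seq step -> {poly int}) :
  (forall w, size w = l -> P w = Q w) ->
  \sum_(w <- words l | P w) F w = \sum_(w <- words l | Q w) F w.
Proof.
move=> PQ; rewrite big_seq_cond [RHS]big_seq_cond; apply: eq_bigl => w.
by case w_l: (w \in words l) => //=; apply/PQ/eqP; rewrite -mem_words.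
Qed.

(* Lemma 2.1 on words: the identity with the sign-dependent factor
   q^[E<N].  Outside the range n < l <= 2n both sides are empty. *)
Lemma sum_above_words rk (rk_inj : injective rk) n l : (0 < n)%N ->
  (\sum_(w <- words l | [&& xcoord w == n, ycoord w == n & goes_above w])
     'X^(maj rk w) : {poly int}) =
  'X^(rk E < rk N)%N *
  \sum_(w <- words l | (xcoord w == n.+1) && (ycoord w == n.-1)) 'X^(maj rk w).
Proof.
move=> n_gt0.
have [/andP [n_l l_2n]|out_of_range] := boolP ((n < l) && (l <= n + n))%N.
  pose k := del_content n n l.
  have k_l : total k = l by rewrite /total /k /del_content !stepE; lia.
  rewrite (eq_sum_words l _ (fun w => content_is k w && goes_above w));
    last first.
    by move=> w w_l; rewrite andbA (Del_content _ _ _ _ w_l) //; lia.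
  rewrite [in RHS](eq_sum_words l _ (fun w => content_is (sh k) w && predT w));
    last first.
    move=> w w_l /=; rewrite andbT (Del_content _ _ _ _ w_l); try lia.
    by rewrite /content_is /k !sh_del_content // ltnW.
  rewrite -!sum_gen_with mulr_sumr; apply: eq_bigr => c _.
  by apply: gen_above_shift; rewrite // /k /del_content !stepE; lia.
rewrite !big1_seq ?mulr0 // => w /andP [+ /[!mem_words] /eqP w_l].
- case/andP => /eqP x_w /eqP y_w; move: out_of_range x_w y_w w_l.
  by rewrite xcoordE ycoordE size_countE; lia.
- case/and3P => /eqP x_w /eqP y_w /goes_above_count_N.
  move: out_of_range x_w y_w w_l.
  by rewrite xcoordE ycoordE size_countE; lia.
Qed.

Theorem lemma2p1 (rk : step -> nat) (rk_inj : injective rk) (n l : nat)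
    (hn : (1 <= n)%N) :
  ((rk E < rk N)%N ->
     (\sum_(W in BDel n l) 'X^(maj rk W) : {poly int})
     = 'X * \sum_(W in Del n.+1 n.-1 l) 'X^(maj rk W))
  /\
  ((rk N < rk E)%N ->
     (\sum_(W in BDel n l) 'X^(maj rk W) : {poly int})
     = \sum_(W in Del n.+1 n.-1 l) 'X^(maj rk W)).
Proof.
have both_orders :
    (\sum_(W in BDel n l) 'X^(maj rk W) : {poly int})
     = 'X^(rk E < rk N)%N * \sum_(W in Del n.+1 n.-1 l) 'X^(maj rk W).
  rewrite (eq_bigl (fun W : l.-tuple step =>
     [&& xcoord W == n, ycoord W == n & goes_above W])); last first.
    by move=> W; rewrite !inE andbA.
  rewrite [in RHS](eq_bigl (fun W : l.-tuple step =>
     (xcoord W == n.+1) && (ycoord W == n.-1))); last by move=> W; rewrite !inE.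
  have /= -> := sum_tuples_words l
    (fun w => [&& xcoord w == n, ycoord w == n & goes_above w])
    (fun w => 'X^(maj rk w)).
  have /= -> := sum_tuples_words l
    (fun w => (xcoord w == n.+1) && (ycoord w == n.-1))
    (fun w => 'X^(maj rk w)).
  exact: sum_above_words.
split=> order; rewrite both_orders; first by rewrite order expr1.
by rewrite (leq_gtF (ltnW order)) expr0 mul1r.
Qed.
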